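(* Consider the $2\times 1$ merge network with parameters $c>0$, $k>0$, $\eta\in(0,\tfrac12)$, constant downstream queue length $Q\ge0$, upstream capacities $c_1=c$, $c_2=kc$, inflows $f_i=\eta c_i$, and weights $\gamma_0,\gamma_1,\gamma_2>0$, operated under the generalized backpressure rule, in regime R1 with unsaturated upstream queue $u$ and saturated upstream queue $s$. Suppose that at time $t\ge1$, $p_{max}(t)=p_s(t)$ and the saturated queue is the one activated, i.e. $i^*(t)=s$. Then: (a) if $q_u(t)>f_u$, then $\tilde p_{max}(t+2)<p_{max}(t)$; (b) if $q_u(t)=f_u$ and $\Delta p(t)=0$, then $i^*(t+1)=i^*(t+2)=u$. In other words, $q_s$ is activated at most once consecutively and it is followed by two activations of $q_u$.
   Context: Model: discrete time; two upstream queues $q_1(t),q_2(t)\ge0$ merge into a downstream queue of constant length $Q$. Priorities: $p_i(t)=(\gamma_i q_i(t)-\gamma_0 Q)c_i$. At each step exactly one upstream queue, denoted $i^*(t)$, is activated, one of maximal priority (ties broken arbitrarily); the activated queue evolves as $q_i(t+1)=q_i(t)-\min(q_i(t),c_i)+f_i$, the other as $q_j(t+1)=q_j(t)+f_j$. $p_{max}(t)=\max_i p_i(t)$; $\tilde p_{max}(t)=\min_{v\in\{t-1,t\}}p_{max}(v)$; $\Delta p(t)=p_{i^*(t)}(t)-p_j(t)$ with $j$ the non-activated queue. $f_u$ is the minimal possible length $q_{u,min}$ of queue $u$. Regime R1: exactly one upstream queue, $u$, is unsaturated (outflow $\min(q_u,c_u)<c_u$), the other, $s$, is saturated (outflow equal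 to $c_s$ when activated). *)

From Stdlib Require Import Reals Lra.
Open Scope R_scope.

Inductive queue := Q1 | Q2.

Definition other (i : queue) : queue := match i with Q1 => Q2 | Q2 => Q1 end.

Definition cap (c k : R) (i : queue) : R :=
  match i with Q1 => c | Q2 => k * c end.

Definition inflow (c k eta : R) (i : queue) : R := eta * cap c k i.

Definition prio (c k g0 Q : R) (g : queue -> R) (q : nat -> queue -> R)
  (t : nat) (i : queue) : R :=
  (g i * q t i - g0 * Q) * cap c k i.

Definition pmax (c k g0 Q : R) (g : queue -> R) (q : nat -> queue -> R)
  (t : nat) : R :=
  Rmax (prio c k g0 Q g q t Q1) (prio c k g0 Q g q t Q2).

(* \tilde p_max(t) = min_{v in {t-1,t}} p_max(v)  (used for t >= 1) *)
Definition pmax_tilde (c k g0 Q : R) (g : queue -> R) (q : nat -> queue -> R)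
  (t : nat) : R :=
  Rmin (pmax c k g0 Q g q (t - 1)%nat) (pmax c k g0 Q g q t).

Definition delta_p (c k g0 Q : R) (g : queue -> R) (q : nat -> queue -> R)
  (istar : nat -> queue) (t : nat) : R :=
  prio c k g0 Q g q t (istar t) - prio c k g0 Q g q t (other (istar t)).

Definition backpressure (c k eta g0 Q : R) (g : queue -> R)
  (q : nat -> queue -> R) (istar : nat -> queue) : Prop :=
  (forall t i, 0 <= q t i) /\
  (forall t j, prio c k g0 Q g q t j <= prio c k g0 Q g q t (istar t)) /\
  (forall t, q (S t) (istar t) =
       q t (istar t) - Rmin (q t (istar t)) (cap c k (istar t))
       + inflow c k eta (istar t)) /\
  (forall t, q (S t) (other (istar t)) =
       q t (other (istar t)) + inflow c k eta (other (istar t))).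

(* Regime R1: u unsaturated (outflow < c_u), s = other u saturated (outflow = c_s),
   outflows being measured when the queue is activated. *)
Definition regime_R1 (c k : R) (q : nat -> queue -> R) (istar : nat -> queue)
  (u : queue) : Prop :=
  (forall t, istar t = u -> Rmin (q t u) (cap c k u) < cap c k u) /\
  (forall t, istar t = other u -> Rmin (q t (other u)) (cap c k (other u)) = cap c k (other u)).

(* Serving the saturated queue s lowers q_s by (1 - eta) c_s, so p_s strictly drops, and since
   eta < 1/2 it is still below its old value after one further idle step, where q_s gains only
   eta c_s.  Serving the unsaturated queue u empties it down to f_u.  Hence after s is served at
   t, either p_u(t+1) is below p_s(t) and already p_max(t+1) < p_max(t), or u is served at t+1,
   q_u(t+2) = f_u and p_max(t+2) < p_max(t).  If moreover q_u(t) = f_u and p_u(t) = p_s(t), then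
   p_u(t+1) > p_s(t) > p_s(t+1) and p_u(t+2) = p_u(t) = p_s(t) > p_s(t+2), so u is served twice. *)

From Stdlib Require Import Reals Lra Lia.
Open Scope R_scope.

Lemma other_involutive (i : queue) : other (other i) = i.
Proof. destruct i; reflexivity. Qed.

Lemma queue_eq_or_other (i j : queue) : i = j \/ i = other j.
Proof. destruct i, j; simpl; auto. Qed.

Lemma cap_pos (c k : R) (i : queue) : 0 < c -> 0 < k -> 0 < cap c k i.
Proof. intros Hc Hk; destruct i; simpl; nra. Qed.

Lemma pmax_lt (c k g0 Q : R) (g : queue -> R) (q : nat -> queue -> R) (t : nat)
    (i : queue) (X : R) :
  prio c k g0 Q g q t i < X -> prio c k g0 Q g q t (other i) < X ->
  pmax c k g0 Q g q t < X.
Proof. unfold pmax; destruct i; simpl; intros; apply Rmax_lub_lt; assumption. Qed.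

Section Backpressure.

Variables (c k eta g0 Q : R) (g : queue -> R) (q : nat -> queue -> R) (istar : nat -> queue).
Hypotheses (Hc : 0 < c) (Hk : 0 < k) (Hg : forall i, 0 < g i).
Hypothesis Hbp : backpressure c k eta g0 Q g q istar.

Local Notation p := (prio c k g0 Q g q).
Local Notation f := (inflow c k eta).

Lemma prio_lt (v w : nat) (i : queue) : q v i < q w i -> p v i < p w i.
Proof.
  intro Hlt; unfold prio.
  apply Rmult_lt_compat_r; [apply cap_pos; assumption|].
  apply Rplus_lt_compat_r, Rmult_lt_compat_l; auto.
Qed.

Lemma activated_of_prio_lt (v : nat) (i : queue) : p v (other i) < p v i -> istar v = i.
Proof.
  intro Hlt; destruct Hbp as [_ [Hmax _]].
  destruct (queue_eq_or_other (istar v) i) as [E | E]; [exact E|].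
  specialize (Hmax v i); rewrite E in Hmax; lra.
Qed.

Lemma queue_idle_step (v : nat) (i : queue) :
  istar v = other i -> q (S v) i = q v i + f i.
Proof.
  intro E; destruct Hbp as [_ [_ [_ Hoth]]].
  specialize (Hoth v); rewrite E, other_involutive in Hoth; exact Hoth.
Qed.

Section RegimeR1.

Variable u : queue.
Hypothesis HR1 : regime_R1 c k q istar u.
Hypotheses (Heta : 0 < eta) (Heta2 : eta < 1 / 2).

Lemma queue_u_served (v : nat) : istar v = u -> q (S v) u = f u.
Proof.
  intro E; destruct Hbp as [_ [_ [Hact _]]]; destruct HR1 as [Ru _].
  specialize (Hact v); specialize (Ru v E); rewrite E in Hact; rewrite Hact.
  unfold Rmin in *; destruct (Rle_dec (q v u) (cap c k u)); lra.
Qed.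

Lemma queue_s_served (v : nat) :
  istar v = other u -> q (S v) (other u) = q v (other u) - cap c k (other u) + f (other u).
Proof.
  intro E; destruct Hbp as [_ [_ [Hact _]]]; destruct HR1 as [_ Rs].
  specialize (Hact v); rewrite E, (Rs v E) in Hact; exact Hact.
Qed.

Variable t : nat.
Hypothesis Hst : istar t = other u.

Lemma prio_s_served_lt : p (S t) (other u) < p t (other u).
Proof.
  apply prio_lt; rewrite queue_s_served by assumption; unfold inflow.
  pose proof (cap_pos c k (other u) Hc Hk); nra.
Qed.

Lemma prio_s_served_idle_lt : istar (S t) = u -> p (S (S t)) (other u) < p t (other u).
Proof.
  intro E; apply prio_lt.
  rewrite queue_idle_step by (rewrite other_involutive; exact E).
  rewrite queue_s_served by assumption; unfold inflow.
  pose proof (cap_pos c k (other u) Hc Hk); nra.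
Qed.

Lemma prio_u_idle_lt : p t u < p (S t) u.
Proof.
  apply prio_lt; rewrite queue_idle_step by assumption; unfold inflow.
  pose proof (cap_pos c k u Hc Hk); nra.
Qed.

Lemma u_activated_next : p t (other u) <= p (S t) u -> istar (S t) = u.
Proof. intro Hle; apply activated_of_prio_lt; pose proof prio_s_served_lt; lra. Qed.

Lemma pmax_tilde_lt_after_s :
  p t u <= p t (other u) -> q t u > f u ->
  pmax_tilde c k g0 Q g q (t + 2) < p t (other u).
Proof.
  intros Hpu Hqu; unfold pmax_tilde.
  replace (t + 2 - 1)%nat with (S t) by lia; replace (t + 2)%nat with (S (S t)) by lia.
  destruct (Rlt_or_le (p (S t) u) (p t (other u))) as [Hlt | Hle].
  - eapply Rle_lt_trans; [apply Rmin_l|].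
    apply pmax_lt with (i := u); [exact Hlt | exact prio_s_served_lt].
  - pose proof (u_activated_next Hle) as Hu1.
    eapply Rle_lt_trans; [apply Rmin_r|].
    apply pmax_lt with (i := u); [|exact (prio_s_served_idle_lt Hu1)].
    eapply Rlt_le_trans; [|exact Hpu].
    apply prio_lt; rewrite queue_u_served by exact Hu1; lra.
Qed.

Lemma u_activated_twice_after_s :
  q t u = f u -> p t u = p t (other u) -> istar (S t) = u /\ istar (S (S t)) = u.
Proof.
  intros Hqu Hpu.
  assert (Hu1 : istar (S t) = u)
    by (apply u_activated_next; pose proof prio_u_idle_lt; lra).
  split; [exact Hu1|].
  assert (Hpu2 : p (S (S t)) u = p t u)
    by (unfold prio; rewrite queue_u_served, Hqu by exact Hu1; reflexivity).
  apply activated_of_prio_lt; pose proof (prio_s_served_idle_lt Hu1); lra.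
Qed.

End RegimeR1.

End Backpressure.

Theorem corollary1 (c k eta Q g0 : R) (g : queue -> R)
  (q : nat -> queue -> R) (istar : nat -> queue) (u s : queue) (t : nat) :
  0 < c -> 0 < k -> 0 < eta -> eta < 1 / 2 -> 0 <= Q ->
  0 < g0 -> 0 < g Q1 -> 0 < g Q2 ->
  backpressure c k eta g0 Q g q istar ->
  s = other u ->
  regime_R1 c k q istar u ->
  (1 <= t)%nat ->
  pmax c k g0 Q g q t = prio c k g0 Q g q t s ->
  istar t = s ->
  (q t u > inflow c k eta u ->
     pmax_tilde c k g0 Q g q (t + 2) < pmax c k g0 Q g q t) /\
  (q t u = inflow c k eta u -> delta_p c k g0 Q g q istar t = 0 ->
     istar (t + 1)%nat = u /\ istar (t + 2)%nat = u).
Proof.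
  intros Hc Hk He He2 _ _ Hg1 Hg2 Hbp -> HR1 _ Hpm Hst.
  assert (Hg : forall i, 0 < g i) by (intros []; assumption).
  assert (Hpu : prio c k g0 Q g q t u <= prio c k g0 Q g q t (other u))
    by (rewrite <- Hst; apply Hbp).
  split.
  - intro Hqu; rewrite Hpm.
    exact (pmax_tilde_lt_after_s _ _ _ _ _ _ _ _ Hc Hk Hg Hbp _ HR1 He2 _ Hst Hpu Hqu).
  - intros Hqu Hd.
    unfold delta_p in Hd; rewrite Hst, other_involutive in Hd.
    replace (t + 1)%nat with (S t) by lia; replace (t + 2)%nat with (S (S t)) by lia.
    apply (u_activated_twice_after_s _ _ _ _ _ _ _ _ Hc Hk Hg Hbp _ HR1 He He2 _ Hst Hqu); lra.
Qed.
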